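(* Let $M$ be a point-line configuration of rank $3$ on $[d]$, and let $x,x_1,\dots,x_n$ be $3$-element subsets of $[d]$ not belonging to $\mathcal{C}_3(M)$. (i) If $N$ is a point-line configuration on $[d]$ with $N\ge M$, then $N\ge M^x$ if and only if $x\in\mathcal{C}_3(N)$. (ii) Suppose that $x_{i+1}\in\mathcal{C}_3(M^{x_i})$ for every $i\in[n]$, where $x_{n+1}:=x_1$, and that every $y\in\mathcal{C}_3(M^{x_n})$ belongs to $\mathcal{C}_3(M)\cup\{x_1,\dots,x_n\}$. Then $M^{x_n}$ is a minimal element (for the dependency order) of the set $\mathcal{B}=\{N \text{ matroid on }[d]: N>M,\ \mathcal{C}_1(N)=\emptyset,\ \mathcal{C}_2(N)=\emptyset\}$.
   Context: A matroid $N$ on $[d]$ has dependent sets $\mathcal{D}(N)$ and circuits $\mathcal{C}(N)$; $\mathcal{C}_i(N)$ is the set of circuits of size $i$. A point-line configuration on $[d]$ is a simple matroid (no circuits of size $1$ or $2$) of rank at most $3$; its lines are the maximal subsets of size $\ge3$ and rank $2$, and a $3$-subset is dependent (equivalently a circuit) iff it lies in a line. Dependency order: $N_1\le N_2$ iff $\mathcal{D}(N_1)\subseteq\mathcal{D}(N_2)$; $N_1<N_2$ iff moreover $N_1\neq N_2$. For a $3$-subset $x\notin\mathcal{C}_3(M)$, $M^x$ denotes the unique minimal (for the dependency order) point-line configuration on $[d]$ in which every $3$-subset of every line of $M$ is dependent and $x$ is dependent. *)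

(* A matroid on [d] = 'I_d is represented by its family of
   independent sets I : {set {set 'I_d}} satisfying the independence axioms. *)
From mathcomp Require Import all_boot all_order.
Set Implicit Arguments. Unset Strict Implicit. Unset Printing Implicit Defensive.

Section Matroids.
Variable d : nat.
Notation E := 'I_d.
Notation family := {set {set E}}.

Definition is_matroid (I : family) : bool :=
  [&& set0 \in I,
      [forall A : {set E}, forall B : {set E},
         ((A \in I) && (B \subset A)) ==> (B \in I)] &
      [forall A : {set E}, forall B : {set E},
         [&& A \in I, B \in I & #|A| < #|B|] ==>
         [exists e in B :\: A, e |: A \in I]]].

Definition dependent (I : family) (A : {set E}) : bool := A \notin I.
Definition deps (I : family) : family := [set A | dependent I A].

Definition circuit (I : family) (C : {set E}) : bool :=
  dependent I C && [forall B : {set E}, (B \proper C) ==> (B \in I)].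

Definition circuits_k (I : family) (k : nat) : family :=
  [set C | circuit I C & #|C| == k].

Definition rk (I : family) (A : {set E}) : nat :=
  \max_(B in I | B \subset A) #|B|.

Definition mrank (I : family) : nat := rk I setT.

Definition plc (I : family) : bool :=
  [&& is_matroid I, circuits_k I 1 == set0, circuits_k I 2 == set0
    & mrank I <= 3].

Definition is_line (I : family) (L : {set E}) : bool :=
  [&& 3 <= #|L|, rk I L == 2 &
      [forall L' : {set E}, ((L \proper L') && (3 <= #|L'|)) ==> (rk I L' != 2)]].

Definition dle (I1 I2 : family) : bool := deps I1 \subset deps I2.
Definition dlt (I1 I2 : family) : bool := dle I1 I2 && (I1 != I2).

Definition Mx_cond (M : family) (x : {set E}) (N : family) : bool :=
  [&& plc N,
      [forall L : {set E}, forall T : {set E},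
         [&& is_line M L, T \subset L & #|T| == 3] ==> dependent N T]
    & dependent N x].

Definition Mx_minimal (M : family) (x : {set E}) (N : family) : bool :=
  Mx_cond M x N &&
  [forall N' : family, (Mx_cond M x N' && dle N' N) ==> (N' == N)].

Definition Mx_spec (M : family) (x : {set E}) (N : family) : bool :=
  Mx_minimal M x N &&
  [forall N' : family, Mx_minimal M x N' ==> (N' == N)].

(* M^x : the unique minimal point-line configuration as above
   (defaults to M if no such unique minimal element exists). *)
Definition Mx (M : family) (x : {set E}) : family :=
  if [pick N | Mx_spec M x N] is Some N then N else M.

Definition in_B (M N : family) : bool :=
  [&& is_matroid N, dlt M N, circuits_k N 1 == set0 & circuits_k N 2 == set0].

End Matroids.

(* M^x is the LEAST point-line configuration in which the triples of the
   lines of M and x are dependent, not merely a minimal one: these constraints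
   are preserved by intersecting the families of dependent sets, because all
   sets of size at most 2 are independent and independent sets have size at
   most 3, so the union of the families of independent sets is again a
   point-line configuration. This gives (i). For (ii), a matroid N of B below
   M^{x_n} has a dependent triple that is independent in M; it is a circuit of
   M^{x_n}, hence some x_i. By (i), x_i dependent in N forces x_{i+1}
   dependent in N, so going around the cycle x_n is dependent in N and
   M^{x_n} <= N. *)
From mathcomp Require Import all_boot all_order.
Set Implicit Arguments. Unset Strict Implicit. Unset Printing Implicit Defensive.

Lemma cyclic_closure (P : nat -> Prop) n i :
  (forall j, j < n -> P j -> P (j.+1 %% n)) -> i < n -> P i ->
  forall j, j < n -> P j.
Proof.
move=> Psucc ltin Pi.
have ltn0 : 0 < n by apply: leq_ltn_trans ltin.
have Pshift k : P ((i + k) %% n).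
  elim: k => [|k IHk]; first by rewrite addn0 modn_small.
  have -> : i + k.+1 = (i + k) %% n + 1 %[mod n] by rewrite modnDml addn1 addnS.
  rewrite addn1; exact: Psucc _ (ltn_pmod _ ltn0) IHk.
move=> j ltjn; have := Pshift (n - i + j).
by rewrite addnA (subnKC (ltnW ltin)) modnDl modn_small.
Qed.

Section PointLineConfigurations.
Variable d : nat.
Implicit Types (I N M : {set {set 'I_d}}) (A B L T x : {set 'I_d}).

Lemma is_matroidP I : is_matroid I ->
  [/\ set0 \in I, (forall A B, A \in I -> B \subset A -> B \in I) &
      (forall A B, A \in I -> B \in I -> #|A| < #|B| ->
         exists2 e, e \in B :\: A & e |: A \in I)].
Proof.
case/and3P=> I0 /forallP Isub /forallP Iexch; split=> // A B IA IB.
  by move: (forallP (Isub A) B); rewrite IA IB.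
move=> ltAB; move: (forallP (Iexch A) B); rewrite IA IB ltAB /=.
by case/exists_inP=> e; exists e.
Qed.

Lemma is_matroidI I : set0 \in I ->
  (forall A B, A \in I -> B \subset A -> B \in I) ->
  (forall A B, A \in I -> B \in I -> #|A| < #|B| ->
     exists2 e, e \in B :\: A & e |: A \in I) ->
  is_matroid I.
Proof.
move=> I0 Isub Iexch; apply/and3P; split=> //.
  by apply/forallP=> A; apply/forallP=> B; apply/implyP=> /andP[]; apply: Isub.
apply/forallP=> A; apply/forallP=> B; apply/implyP=> /and3P[IA IB ltAB].
by case: (Iexch A B IA IB ltAB) => e *; apply/exists_inP; exists e.
Qed.

Lemma plcP N : plc N ->
  [/\ is_matroid N, circuits_k N 1 = set0, circuits_k N 2 = set0 & mrank N <= 3].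
Proof. by case/and4P=> ? /eqP ? /eqP ? ?. Qed.

Lemma leq_card_rk I A B : A \in I -> A \subset B -> #|A| <= rk I B.
Proof.
move=> IA AB; rewrite /rk.
by apply: (leq_bigmax_cond (F := fun C : {set 'I_d} => #|C|)); rewrite IA AB.
Qed.

Lemma rk_leqP I B k :
  reflect (forall A, A \in I -> A \subset B -> #|A| <= k) (rk I B <= k).
Proof.
apply: (iffP idP) => [/bigmax_leqP le_k A IA AB | le_k].
  by apply: le_k; rewrite IA AB.
by apply/bigmax_leqP => A /andP[]; apply: le_k.
Qed.

Lemma plc_indep_card N A : plc N -> A \in N -> #|A| <= 3.
Proof. by case/plcP=> _ _ _ rN IA; apply: leq_trans (leq_card_rk IA (subsetT _)) rN. Qed.

Lemma plc_small_indep N A : plc N -> #|A| <= 2 -> A \in N.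
Proof.
case/plcP=> /is_matroidP[N0 _ _] C1 C2 _.
elim: {A}#|A|.+1 {-2}A (ltnSn #|A|) => // n IHn A ltAn le2.
apply/negPn/negP => depA.
have circA : circuit N A.
  apply/andP; split=> //; apply/forallP=> B; apply/implyP=> ltBA.
  have ltBA' := proper_card ltBA.
  by apply: IHn; [apply: leq_trans ltBA' _ | apply: ltnW (leq_trans ltBA' le2)].
move: le2; rewrite leq_eqVlt ltnS leq_eqVlt ltnS leqn0 cards_eq0.
case/or3P=> [/eqP cardA | /eqP cardA | /eqP A0].
- by move/setP: C2 => /(_ A); rewrite !inE circA cardA.
- by move/setP: C1 => /(_ A); rewrite !inE circA cardA.
- by move: depA; rewrite A0 /dependent N0.
Qed.

Lemma plcI N : is_matroid N -> (forall A, #|A| <= 2 -> A \in N) ->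
  (forall A, A \in N -> #|A| <= 3) -> plc N.
Proof.
move=> mN small le3.
have noC k : k <= 2 -> circuits_k N k == set0.
  move=> le2k; apply/eqP/setP=> C; rewrite !inE.
  by apply/negP=> /andP[/andP[depC _] /eqP cardC]; move: depC; rewrite /dependent small ?cardC.
by apply/and4P; split; rewrite ?noC //; apply/rk_leqP => A NA _; apply: le3.
Qed.

Lemma plc_circuit3 N A : plc N ->
  (A \in circuits_k N 3) = dependent N A && (#|A| == 3).
Proof.
move=> pN; rewrite inE /circuit -andbA; congr (_ && _).
case: eqP => cardA; rewrite ?andbT ?andbF //.
apply/forallP=> B; apply/implyP=> ltBA; apply: plc_small_indep pN _.
by have := proper_card ltBA; rewrite cardA.
Qed.

Lemma dleP I1 I2 : reflect (forall A, A \in I2 -> A \in I1) (dle I1 I2).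
Proof.
apply: (iffP subsetP) => [le12 A | le12 A]; last by rewrite !inE; apply: contra; apply: le12.
by move: (le12 A); rewrite !inE /dependent; apply: contraLR.
Qed.

Lemma dle_anti I1 I2 : dle I1 I2 -> dle I2 I1 -> I1 = I2.
Proof.
by move=> /dleP le12 /dleP le21; apply/setP=> A; apply/idP/idP; [apply: le21 | apply: le12].
Qed.

Lemma circuit3_dle N1 N2 A : plc N2 -> dle N1 N2 ->
  A \in circuits_k N1 3 -> A \in circuits_k N2 3.
Proof.
move=> pN2 /subsetP le12; rewrite inE (plc_circuit3 _ pN2) => /andP[/andP[depA _] ->].
by have := le12 A; rewrite !inE andbT; apply.
Qed.

(* A union of matroids is not a matroid in general; here the smaller set of an
   exchange has size at most 2, so it lies in both families. *)
Lemma plcU N1 N2 : plc N1 -> plc N2 -> plc (N1 :|: N2).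
Proof.
move=> pN1 pN2.
have exchange N A B : plc N -> B \in N -> #|A| < #|B| ->
    (forall A, A \in N -> A \in N1 :|: N2) ->
    exists2 e, e \in B :\: A & e |: A \in N1 :|: N2.
  move=> pN NB ltAB subN.
  have NA : A \in N.
    by apply: (plc_small_indep pN); rewrite -ltnS (leq_trans ltAB) ?(plc_indep_card pN NB).
  case/plcP: pN => /is_matroidP[_ _ Nexch] _ _ _.
  by case: (Nexch A B NA NB ltAB) => e eBA NeA; exists e; last exact: subN.
case/plcP: (pN1) => /is_matroidP[N10 N1sub _] _ _ _.
case/plcP: (pN2) => /is_matroidP[_ N2sub _] _ _ _.
apply: plcI.
- apply: is_matroidI; first by rewrite inE N10.
    move=> A B; rewrite !inE => /orP[] NA BA.
      by rewrite (N1sub A).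
    by rewrite (N2sub A) ?orbT.
  move=> A B _; rewrite inE => /orP[] NB ltAB.
    by apply: exchange pN1 NB ltAB _ => C NC; rewrite inE NC.
  by apply: exchange pN2 NB ltAB _ => C NC; rewrite inE NC orbT.
- by move=> A le2; rewrite inE plc_small_indep.
- by move=> A; rewrite inE => /orP[]; apply: plc_indep_card.
Qed.

Definition uniform2 := [set A : {set 'I_d} | #|A| <= 2].

Lemma plc_uniform2 : plc uniform2.
Proof.
apply: plcI => [| A | A]; rewrite ?inE //; last by move/leq_trans; apply.
apply: is_matroidI => [| A B | A B]; rewrite !inE ?cards0 //.
  by move=> le2 /subset_leq_card/leq_trans; apply.
move=> le2A le2B ltAB.
have /set0Pn[e eBA] : B :\: A != set0.
  by rewrite setD_eq0; apply: contraTN ltAB => /subset_leq_card; rewrite -leqNgt.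
exists e => //; move: eBA; rewrite inE => /andP[eA _].
by rewrite inE cardsU1 eA add1n (leq_trans ltAB).
Qed.

Lemma Mx_condU M x N1 N2 :
  Mx_cond M x N1 -> Mx_cond M x N2 -> Mx_cond M x (N1 :|: N2).
Proof.
case/and3P=> pN1 /forallP lines1 dep1 /and3P[pN2 /forallP lines2 dep2].
have depU A : dependent N1 A -> dependent N2 A -> dependent (N1 :|: N2) A.
  by rewrite /dependent inE negb_or => -> ->.
apply/and3P; split; [exact: plcU | | exact: depU].
apply/forallP=> L; apply/forallP=> T; apply/implyP=> lineT.
by apply: depU; [move: (forallP (lines1 L) T) | move: (forallP (lines2 L) T)];
  rewrite lineT.
Qed.

Lemma Mx_cond_uniform2 M x : 2 < #|x| -> Mx_cond M x uniform2.
Proof.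
move=> gt2x; apply/and3P; split; first exact: plc_uniform2.
  apply/forallP=> L; apply/forallP=> T; apply/implyP=> /and3P[_ _ /eqP cardT].
  by rewrite /dependent inE cardT.
by rewrite /dependent inE -ltnNge.
Qed.

Lemma Mx_minimal_le M x N N' : Mx_minimal M x N -> Mx_cond M x N' -> dle N N'.
Proof.
case/andP=> condN /forallP minN condN'.
have /eqP NU : N :|: N' == N.
  apply: (implyP (minN (N :|: N'))); rewrite Mx_condU //=.
  by apply/dleP => A; rewrite inE => ->.
by apply/dleP => A N'A; rewrite -NU inE N'A orbT.
Qed.

(* Minimising the number of dependent sets yields a minimal element; it is
   the least one since the constraints are closed under unions. *)
Lemma Mx_spec_exists M x : 2 < #|x| -> exists N, Mx_spec M x N.
Proof.
move=> gt2x.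
case: (arg_minnP (fun N => #|deps N|) (Mx_cond_uniform2 M gt2x)) => N condN minN.
have minimalN : Mx_minimal M x N.
  apply/andP; split=> //; apply/forallP=> N'; apply/implyP=> /andP[condN' leN'N].
  have depsN' : deps N' = deps N.
    by apply/eqP; rewrite eqEcard (leN'N : deps N' \subset deps N) minN.
  by apply/eqP/dle_anti; rewrite // /dle depsN'.
exists N; apply/andP; split=> //; apply/forallP=> N'; apply/implyP=> minimalN'.
case/andP: (minimalN') => condN' /forallP minN'.
rewrite eq_sym; apply: (implyP (minN' N)); rewrite condN.
exact: Mx_minimal_le minimalN condN'.
Qed.

Lemma Mx_least M x : 2 < #|x| ->
  Mx_cond M x (Mx M x) /\ (forall N, Mx_cond M x N -> dle (Mx M x) N).
Proof.
move=> gt2x; have [N specN] := Mx_spec_exists M gt2x.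
have minMx : Mx_minimal M x (Mx M x).
  by rewrite /Mx; case: pickP => [N' /andP[] // | /(_ N)]; rewrite specN.
split=> [|N']; first by case/andP: minMx.
exact: Mx_minimal_le.
Qed.

Lemma line_dep M L T : is_line M L -> T \subset L -> 2 < #|T| -> dependent M T.
Proof.
case/and3P=> _ /eqP rkL _ TL gt2T; apply/negP=> MT.
by have := leq_card_rk MT TL; rewrite rkL leqNgt gt2T.
Qed.

(* A dependent triple has rank 2; a largest superset of rank 2 is a line. *)
Lemma dep3_sub_line M A : plc M -> #|A| = 3 -> dependent M A ->
  exists2 L, is_line M L & A \subset L.
Proof.
move=> pM cardA depA.
pose rank2_over L := [&& A \subset L, 3 <= #|L| & rk M L == 2].
have rank2A : rank2_over A.
  rewrite /rank2_over subxx cardA eqn_leq /=; apply/andP; split.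
    apply/rk_leqP => B MB BA.
    have ltBA : B \proper A by rewrite properEneq BA andbT; apply: contraNneq depA => <-.
    by have := proper_card ltBA; rewrite cardA.
  have /card_gt0P[a aA] : 0 < #|A| by rewrite cardA.
  have cardAa : #|A :\ a| = 2 by move: (cardsD1 a A); rewrite aA cardA => -[].
  by rewrite -{1}cardAa leq_card_rk ?subD1set // (plc_small_indep pM) ?cardAa.
case: (arg_maxnP (fun L => #|L|) rank2A) => L /and3P[AL ge3L /eqP rkL] maxL.
exists L => //; rewrite /is_line ge3L rkL eqxx /=.
apply/forallP=> L'; apply/implyP=> /andP[ltLL' ge3L']; apply/negP=> /eqP rkL'.
have := maxL L'; rewrite /rank2_over ge3L' rkL' eqxx (subset_trans AL (proper_sub ltLL')).
by move/(_ isT)/leq_ltn_trans/(_ (proper_card ltLL')); rewrite ltnn.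
Qed.

Lemma Mx_cond_dle M x N : plc M -> Mx_cond M x N -> dle M N.
Proof.
move=> pM /and3P[pN /forallP lines _]; apply/subsetP=> A; rewrite !inE => depA.
case: (ltngtP #|A| 3) => [lt3A | gt3A | cardA].
- by move: depA; rewrite /dependent plc_small_indep.
- by apply/negP=> NA; have := plc_indep_card pN NA; rewrite leqNgt gt3A.
- have [L lineL AL] := dep3_sub_line pM cardA depA.
  by move: (forallP (lines L) A); rewrite lineL AL cardA eqxx.
Qed.

Lemma dle_Mx M x N : #|x| = 3 -> plc N -> dle M N ->
  dle (Mx M x) N <-> x \in circuits_k N 3.
Proof.
move=> cardx pN leMN; have gt2x : 2 < #|x| by rewrite cardx.
have [/and3P[pMx _ depx] leastMx] := Mx_least M gt2x.
split=> [leMxN | circNx].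
  by apply: circuit3_dle pN leMxN _; rewrite plc_circuit3 // depx cardx.
apply: leastMx; apply/and3P; split=> //; last first.
  by move: circNx; rewrite plc_circuit3 // => /andP[].
apply/forallP=> L; apply/forallP=> T; apply/implyP=> /and3P[lineL TL /eqP cardT].
have depMT : dependent M T by apply: line_dep lineL TL _; rewrite cardT.
by move: (subsetP leMN T); rewrite !inE; apply.
Qed.

Lemma in_B_Mx M x : plc M -> #|x| = 3 -> x \notin circuits_k M 3 -> in_B M (Mx M x).
Proof.
move=> pM cardx circMx; have gt2x : 2 < #|x| by rewrite cardx.
have [condMx _] := Mx_least M gt2x; case/and3P: (condMx) => pMx _ depx.
have xM : x \in M.
  by apply/negPn; apply: contra circMx; rewrite plc_circuit3 // cardx eqxx andbT.
case/and4P: pMx => mMx C1 C2 _.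
rewrite /in_B mMx C1 C2 /dlt (Mx_cond_dle pM condMx) !andbT /=.
by apply: contraNneq depx => <-.
Qed.

Lemma in_B_plc M N : plc M -> in_B M N -> plc N.
Proof.
move=> pM /and4P[mN /andP[/dleP leMN _] C1 C2].
apply/and4P; split=> //.
by apply/rk_leqP => A NA _; apply: plc_indep_card pM (leMN A NA).
Qed.

Lemma in_B_new_circuit M N : plc M -> in_B M N ->
  exists2 A, A \in M & A \in circuits_k N 3.
Proof.
move=> pM BN; have pN := in_B_plc pM BN.
case/and4P: BN => _ /andP[/dleP leMN neMN] _ _.
have /set0Pn[A] : M :\: N != set0.
  apply: contra neMN; rewrite setD_eq0 => MN; rewrite eqEsubset MN.
  by apply/subsetP => A; apply: leMN.
rewrite inE => /andP[NA MA]; exists A => //.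
rewrite plc_circuit3 // /dependent NA eqn_leq (plc_indep_card pM MA) /=.
by rewrite ltnNge; apply: contra NA => /(plc_small_indep pN).
Qed.

End PointLineConfigurations.

Theorem mainTheorem7 (d : nat) (M : {set {set 'I_d}}) :
  plc M -> mrank M = 3 ->
  (* (i) *)
  (forall (x : {set 'I_d}), #|x| = 3 -> x \notin circuits_k M 3 ->
     forall N : {set {set 'I_d}}, plc N -> dle M N ->
       (dle (Mx M x) N <-> x \in circuits_k N 3)) /\
  (* (ii) : x_1, ..., x_n are xs 0, ..., xs (n-1) *)
  (forall (n : nat) (xs : nat -> {set 'I_d}), 0 < n ->
     (forall i, i < n -> #|xs i| = 3 /\ xs i \notin circuits_k M 3) ->
     (forall i, i < n -> xs (i.+1 %% n) \in circuits_k (Mx M (xs i)) 3) ->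
     (forall y, y \in circuits_k (Mx M (xs n.-1)) 3 ->
        y \in circuits_k M 3 \/ exists2 i, i < n & y = xs i) ->
     in_B M (Mx M (xs n.-1)) /\
     (forall N : {set {set 'I_d}}, in_B M N -> dle N (Mx M (xs n.-1)) ->
        N = Mx M (xs n.-1))).
Proof.
move=> pM _; split=> [x cardx _ N pN leMN | n xs n_gt0 xsP cycle closed].
  exact: dle_Mx.
have ltn1n : n.-1 < n by rewrite prednK.
have [cardX circMX] := xsP _ ltn1n; have BX := in_B_Mx pM cardX circMX.
set X := Mx M (xs n.-1) in BX closed *; split=> // N BN leNX.
have pN := in_B_plc pM BN; have leMN : dle M N by case/and4P: BN => _ /andP[].
have [A MA circNA] := in_B_new_circuit pM BN.
have pX := in_B_plc pM BX.
have [circMA | [i ltin Axi]] := closed A (circuit3_dle pX leNX circNA).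
  by move: circMA; rewrite plc_circuit3 // /dependent MA.
have xsN : forall j, j < n -> xs j \in circuits_k N 3.
  apply: (cyclic_closure _ ltin); last by rewrite -Axi.
  move=> j ltjn circNj; have [cardj _] := xsP j ltjn.
  exact: circuit3_dle pN ((dle_Mx cardj pN leMN).2 circNj) (cycle j ltjn).
by apply: dle_anti leNX _; apply/(dle_Mx cardX pN leMN)/xsN.
Qed.
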